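(* There is a sequence of positive numbers $(a_k)_{k\ge1}$ with $\sum_{k=1}^\infty a_k<\infty$ such that $\mathbb E(U_k)\le a_k$ for every $n\ge 2k$ and every $p\ge 2/5$, where $U_k$ is the number of proper star $k$-separations of $\Gamma\in G(n,p)$.
   Context: $G(n,p)$ is the Erdős–Rényi random graph on vertex set $V$, $|V|=n$, each edge independently present with probability $p$. For a graph $\Delta$ with vertex set $W$, a separation is $S\subset W$ with $S\ne\varnothing$, $S\ne W$ and no edges between $S$ and $W\setminus S$. $\mathrm{st}(a)$ is $a$ with its neighbours. A star separation of $\Gamma$ is a pair $(a,S)$ with $a\in V$, $S\subset V\setminus\mathrm{st}(a)$, such that $S$ is a separation of the full subgraph $\Gamma\setminus\mathrm{st}(a)$; it is a star $k$-separation if $|S|=k$, and proper if $S$ is not a separation of $\Gamma$. *)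

From HB Require Import structures.
From mathcomp Require Import all_boot all_order all_algebra.
Set Implicit Arguments. Unset Strict Implicit. Unset Printing Implicit Defensive.
Import Order.TTheory GRing.Theory Num.Theory.
Local Open Scope ring_scope.

(* A simple graph on the vertex set 'I_n is given by its edge set
   E : {set {set 'I_n}}; only 2-element sets count as edges. *)
Definition pairs (n : nat) : {set {set 'I_n}} := [set e : {set 'I_n} | #|e| == 2%N].

Definition adj n (E : {set {set 'I_n}}) (x y : 'I_n) : bool :=
  (x != y) && ([set x; y] \in E).

Definition star n (E : {set {set 'I_n}}) (a : 'I_n) : {set 'I_n} :=
  [set x | (x == a) || adj E a x].

Definition is_sep n (E : {set {set 'I_n}}) (W S : {set 'I_n}) : bool :=
  [&& S \subset W, S != set0, S != W &
      [forall x in S, forall y in W :\: S, ~~ adj E x y]].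

Definition star_sep n (E : {set {set 'I_n}}) (a : 'I_n) (S : {set 'I_n}) : bool :=
  (S \subset ~: star E a) && is_sep E (~: star E a) S.

Definition proper_star_ksep n (E : {set {set 'I_n}}) (k : nat) (a : 'I_n)
    (S : {set 'I_n}) : bool :=
  [&& star_sep E a S, #|S| == k & ~~ is_sep E [set: 'I_n] S].

Definition U n (k : nat) (E : {set {set 'I_n}}) : nat :=
  #|[set aS : 'I_n * {set 'I_n} | proper_star_ksep E k aS.1 aS.2]|.

Definition gnp_prob (R : numDomainType) n (p : R) (E : {set {set 'I_n}}) : R :=
  \prod_(e in pairs n) (if e \in E then p else 1 - p).

Definition gnp_expect (R : numDomainType) n (p : R)
    (X : {set {set 'I_n}} -> R) : R :=
  \sum_(E : {set {set 'I_n}} | E \subset pairs n) gnp_prob p E * X E.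

From HB Require Import structures.
From mathcomp Require Import all_boot all_order all_algebra.
From mathcomp Require Import all_classical all_reals all_analysis.
From mathcomp Require Import ring lra zify.
Import Order.TTheory GRing.Theory Num.Theory numFieldNormedType.Exports.
Local Open Scope ring_scope.
Set Implicit Arguments. Unset Strict Implicit. Unset Printing Implicit Defensive.

(* Write q = 1 - p. If (a, S) is a star k-separation, pick y outside st(a)
   and S: then a is joined to no vertex of S + y, y to no vertex of S, and
   every other vertex x is joined to a or to no vertex of S (otherwise x would
   lie outside st(a) and be adjacent to S). These conditions concern pairwise
   disjoint sets of edges, so for fixed (a, S, y) they hold with probability
   q^(2k+1) (p + q^(k+1))^(n-k-2). Summing over (a, S, y) gives
   E U_k <= (k+1)(k+2) C(n, k+2) q^(2k+1) (p + q^(k+1))^(n-k-2); one term of the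
   binomial expansion of (x + s)^n = 1 with x = q (1 - q^k), s = p + q^(k+1)
   bounds this by (k+1)(k+2) q^(k-1) / (1 - q^k)^(k+2), which for q <= 3/5 is at
   most [sep_bound k]; its ratios are eventually below 19/20. *)

Lemma big_subset_setD1 (R : nmodType) (T : finType) (Q : {set T}) (e : T)
    (F : {set T} -> R) : e \in Q ->
  \sum_(E : {set T} | E \subset Q) F E =
  \sum_(E : {set T} | E \subset Q :\ e) (F (e |: E) + F E).
Proof.
move=> eQ; rewrite big_split /= [LHS](bigID (fun E : {set T} => e \in E)) /=.
congr (_ + _); last by apply: eq_bigl => E; rewrite subsetD1.
rewrite (reindex_onto (fun E => e |: E) (fun E => E :\ e)) /=; last first.
  by move=> E /andP[_ eE]; rewrite finset.setD1K.
apply: eq_bigl => E; rewrite setU11 andbT subsetD1.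
have [eE|eE] := boolP (e \in E).
  by rewrite andbF; apply/negbTE/andP => -[_ /eqP EeE]; rewrite -EeE setD11 in eE.
by rewrite finset.setU1K // eqxx finset.subUset finset.sub1set eQ !andbT.
Qed.

Section BernoulliProduct.
Variables (R : numDomainType) (T : finType) (p : R).
Implicit Types (Q E : {set T}) (e : T) (f g : {set T} -> R).

Definition wt (Q E : {set T}) : R := \prod_(e in Q) (if e \in E then p else 1 - p).

(* [gnp_expect p X] is [pexpect p (pairs n) X] by conversion. *)
Definition pexpect (Q : {set T}) (f : {set T} -> R) : R :=
  \sum_(E : {set T} | E \subset Q) wt Q E * f E.

Definition indep_of (e : T) (f : {set T} -> R) := forall E, f (E :\ e) = f E.

Lemma wt_ge0 Q E : 0 <= p -> p <= 1 -> 0 <= wt Q E.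
Proof. by move=> p0 p1; apply: prodr_ge0 => e _; case: ifP; rewrite ?subr_ge0. Qed.

Lemma wt_setU1 Q E e : e \in Q -> e \notin E -> wt Q (e |: E) = p * wt (Q :\ e) E.
Proof.
move=> eQ eE; rewrite /wt (big_setD1 e) //= setU11; congr (_ * _).
by apply: eq_bigr => i; rewrite in_setD1 in_setU1 => /andP[/negbTE-> _].
Qed.

Lemma wt_notin Q E e : e \in Q -> e \notin E -> wt Q E = (1 - p) * wt (Q :\ e) E.
Proof. by move=> eQ eE; rewrite /wt (big_setD1 e) //= (negbTE eE). Qed.

Lemma eq_pexpect Q f g : (forall E, f E = g E) -> pexpect Q f = pexpect Q g.
Proof. by move=> fg; apply: eq_bigr => E _; rewrite fg. Qed.

Lemma pexpectD Q f g : pexpect Q (fun E => f E + g E) = pexpect Q f + pexpect Q g.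
Proof. by rewrite -big_split; apply: eq_bigr => E _; rewrite mulrDr. Qed.

Lemma pexpectZ Q c f : pexpect Q (fun E => c * f E) = c * pexpect Q f.
Proof. by rewrite /pexpect mulr_sumr; apply: eq_bigr => E _; rewrite mulrCA. Qed.

Lemma pexpect_sum (I : Type) (r : seq I) (P : pred I) (F : I -> {set T} -> R) Q :
  pexpect Q (fun E => \sum_(i <- r | P i) F i E) = \sum_(i <- r | P i) pexpect Q (F i).
Proof. by rewrite /pexpect; under eq_bigr do rewrite mulr_sumr; exact: exchange_big. Qed.

Lemma ler_pexpect Q f g : 0 <= p -> p <= 1 -> (forall E, f E <= g E) ->
  pexpect Q f <= pexpect Q g.
Proof.
by move=> p0 p1 fg; apply: ler_sum => E _; apply: ler_wpM2l (fg E); apply: wt_ge0.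
Qed.

Lemma pexpect_setD1 Q e f : e \in Q -> indep_of e f ->
  pexpect Q f = pexpect (Q :\ e) f.
Proof.
move=> eQ fe; rewrite /pexpect (big_subset_setD1 _ eQ).
apply: eq_bigr => E; rewrite subsetD1 => /andP[_ eE].
rewrite (wt_setU1 eQ eE) (wt_notin eQ eE) -fe finset.setU1K //.
by rewrite -!mulrA -mulrDl addrC subrK mul1r.
Qed.

Lemma pexpect1 Q : pexpect Q (fun _ => 1) = 1.
Proof.
elim: {Q}_.+1 {-2}Q (ltnSn #|Q|) => // m IH Q ltQm.
have [->|[e eQ]] := finset.set_0Vmem Q.
  rewrite /pexpect (big_pred1 finset.set0) ?mulr1 /wt ?big_set0 // => E.
  by rewrite finset.subset0.
rewrite (pexpect_setD1 eQ) //; apply: IH.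
by rewrite (cardsD1 e) eQ in ltQm.
Qed.

Lemma pexpect_notin Q e f : e \in Q -> indep_of e f ->
  pexpect Q (fun E => (e \notin E)%:R * f E) = (1 - p) * pexpect Q f.
Proof.
move=> eQ fe; rewrite (pexpect_setD1 eQ fe) /pexpect (big_subset_setD1 _ eQ).
rewrite mulr_sumr; apply: eq_bigr => E; rewrite subsetD1 => /andP[_ eE].
by rewrite setU11 eE mul0r mulr0 add0r mul1r (wt_notin eQ eE) mulrA.
Qed.

Lemma pexpect_in Q e f : e \in Q -> indep_of e f ->
  pexpect Q (fun E => (e \in E)%:R * f E) = p * pexpect Q f.
Proof.
move=> eQ fe; rewrite (pexpect_setD1 eQ fe) /pexpect (big_subset_setD1 _ eQ).
rewrite mulr_sumr; apply: eq_bigr => E; rewrite subsetD1 => /andP[_ eE].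
rewrite setU11 (negbTE eE) mul0r mulr0 addr0 mul1r (wt_setU1 eQ eE).
by rewrite -fe finset.setU1K // mulrA.
Qed.

Lemma indep_of_in e e' : e' != e -> indep_of e (fun E => (e' \in E)%:R).
Proof. by move=> e'e E; rewrite in_setD1 e'e. Qed.

Lemma indep_of_notin e e' : e' != e -> indep_of e (fun E => (e' \notin E)%:R).
Proof. by move=> e'e E; rewrite in_setD1 e'e. Qed.

Lemma indep_ofD e f g : indep_of e f -> indep_of e g -> indep_of e (fun E => f E + g E).
Proof. by move=> fe ge E; rewrite fe ge. Qed.

Lemma indep_ofM e f g : indep_of e f -> indep_of e g -> indep_of e (fun E => f E * g E).
Proof. by move=> fe ge E; rewrite fe ge. Qed.

Lemma indep_of_prod (I : finType) (A : {set I}) e (F : I -> {set T} -> R) :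
  (forall i, i \in A -> indep_of e (F i)) -> indep_of e (fun E => \prod_(i in A) F i E).
Proof. by move=> Fe E; apply: eq_bigr => i /Fe. Qed.

Lemma pexpect_avoid (I : finType) (A : {set I}) (eps : I -> T) Q f :
    {in A &, injective eps} -> (forall i, i \in A -> eps i \in Q) ->
    (forall i, i \in A -> indep_of (eps i) f) ->
  pexpect Q (fun E => \prod_(i in A) (eps i \notin E)%:R * f E) =
  (1 - p) ^+ #|A| * pexpect Q f.
Proof.
elim: {A}_.+1 {-2}A (ltnSn #|A|) => // m IH A ltAm epsI epsQ fe.
have [->|[i iA]] := finset.set_0Vmem A.
  by rewrite cards0 mul1r; apply: eq_pexpect => E; rewrite big_set0 mul1r.
have subA : {subset A :\ i <= A} by move=> j /setD1P[].
rewrite (cardsD1 i A) iA exprS -mulrA -IH; first last.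
- by move=> j /subA /fe.
- by move=> j /subA /epsQ.
- exact: sub_in2 epsI.
- by rewrite (cardsD1 i) iA in ltAm.
rewrite -(pexpect_notin (e := eps i)) ?epsQ //; last first.
  apply: indep_ofM (fe i iA); apply: indep_of_prod => j /setD1P[ji jA].
  by apply: indep_of_notin; apply: contra ji => /eqP/epsI-> //.
by apply: eq_pexpect => E; rewrite (big_setD1 i) //= mulrA.
Qed.

Definition present_or_avoid (I : finType) (S : {set I}) e0 (eps : I -> T) E : R :=
  (e0 \in E)%:R + (e0 \notin E)%:R * \prod_(s in S) (eps s \notin E)%:R.

Lemma indep_of_present_or_avoid (I : finType) (S : {set I}) e0 (eps : I -> T) e :
  e \notin e0 |: eps @: S -> indep_of e (present_or_avoid S e0 eps).
Proof.
rewrite in_setU1 negb_or eq_sym => /andP[e0e epsSe].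
apply: indep_ofD; first exact: indep_of_in.
apply: indep_ofM; first exact: indep_of_notin.
apply: indep_of_prod => s sS; apply: indep_of_notin.
by apply: contraNneq epsSe => <-; apply: imset_f.
Qed.

Lemma present_or_avoid_ge0 (I : finType) (S : {set I}) e0 (eps : I -> T) E :
  0 <= present_or_avoid S e0 eps E.
Proof. by rewrite addr_ge0 ?mulr_ge0 ?prodr_ge0. Qed.

Lemma pexpect_present_or_avoid (I : finType) (S : {set I}) e0 (eps : I -> T) Q f :
    e0 \in Q -> {in S &, injective eps} -> (forall s, s \in S -> eps s \in Q) ->
    (forall s, s \in S -> eps s != e0) ->
    (forall e, e \in e0 |: eps @: S -> indep_of e f) ->
  pexpect Q (fun E => present_or_avoid S e0 eps E * f E) =
  (p + (1 - p) ^+ #|S|.+1) * pexpect Q f.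
Proof.
move=> e0Q epsI epsQ epsne fe.
have fe0 : indep_of e0 f by apply: fe; rewrite setU11.
have feps s : s \in S -> indep_of (eps s) f.
  by move=> sS; apply: fe; rewrite in_setU1 imset_f ?orbT.
rewrite (eq_pexpect _ (g := fun E => (e0 \in E)%:R * f E + (e0 \notin E)%:R *
  (\prod_(s in S) (eps s \notin E)%:R * f E))); last first.
  by move=> E; rewrite mulrDl mulrA.
rewrite pexpectD pexpect_in // pexpect_notin // ?pexpect_avoid //.
  by rewrite [RHS]mulrDl exprS mulrA.
apply: indep_ofM fe0; apply: indep_of_prod => s sS.
exact: indep_of_notin (epsne s sS).
Qed.

Lemma pexpect_prod_present_or_avoid (I J : finType) (S : {set I}) (X : {set J})
    (e0 : J -> T) (eps : J -> I -> T) Q :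
    (forall x, x \in X -> e0 x \in Q) ->
    (forall x, x \in X -> {in S &, injective (eps x)}) ->
    (forall x s, x \in X -> s \in S -> eps x s \in Q) ->
    (forall x s, x \in X -> s \in S -> eps x s != e0 x) ->
    {in X &, forall x y, x != y ->
       [disjoint e0 x |: eps x @: S & e0 y |: eps y @: S]} ->
  pexpect Q (fun E => \prod_(x in X) present_or_avoid S (e0 x) (eps x) E) =
  (p + (1 - p) ^+ #|S|.+1) ^+ #|X|.
Proof.
elim: {X}_.+1 {-2}X (ltnSn #|X|) => // m IH X ltXm e0Q epsI epsQ epsne dis.
have [->|[x xX]] := finset.set_0Vmem X.
  by rewrite cards0 expr0 -[RHS](pexpect1 Q); apply: eq_pexpect => E; rewrite big_set0.
have subX : {subset X :\ x <= X} by move=> y /setD1P[].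
rewrite (cardsD1 x X) xX add1n (exprS _ #|X :\ x|) -IH; first last.
- exact: sub_in2 dis.
- by move=> y s /subX; apply: epsne.
- by move=> y s /subX; apply: epsQ.
- by move=> y /subX; apply: epsI.
- by move=> y /subX; apply: e0Q.
- by rewrite (cardsD1 x) xX in ltXm.
have rest_indep e : e \in e0 x |: eps x @: S ->
    indep_of e (fun E => \prod_(y in X :\ x) present_or_avoid S (e0 y) (eps y) E).
  move=> ex; apply: indep_of_prod => y /setD1P[yx yX].
  apply: indep_of_present_or_avoid; apply: contraTN ex => ey.
  by rewrite (disjointFl (dis x y xX yX _)) // eq_sym.
rewrite -(pexpect_present_or_avoid (e0Q x xX) (epsI x xX) (epsQ x^~ xX)
  (epsne x^~ xX) rest_indep).
by apply: eq_pexpect => E; rewrite (big_setD1 x).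
Qed.

End BernoulliProduct.

Arguments present_or_avoid {R T I}.

Section StarSeparations.
Variables (R : numDomainType) (n : nat).
Implicit Types (a s u v w x y : 'I_n) (S : {set 'I_n}) (E : {set {set 'I_n}}).

Definition edge u v : {set 'I_n} := [set u; v].

Lemma edgeC u v : edge u v = edge v u.
Proof. exact: finset.setUC. Qed.

Lemma edge_pairs u v : u != v -> edge u v \in pairs n.
Proof. by move=> uv; rewrite inE cards2 uv. Qed.

Lemma edge_neqL u v u' v' : u != u' -> u != v' -> edge u v != edge u' v'.
Proof.
move=> uu' uv'; apply/eqP => e.
have : u \in edge u' v' by rewrite -e !inE eqxx.
by rewrite !inE (negbTE uu') (negbTE uv').
Qed.

Lemma edge_neqR u v u' v' : v != u' -> v != v' -> edge u v != edge u' v'.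
Proof. by rewrite edgeC; apply: edge_neqL. Qed.

Lemma edge_injr a S : a \notin S -> {in S &, injective (edge a)}.
Proof.
move=> aS s s' sS s'S e; have : s \in edge a s' by rewrite -e !inE eqxx orbT.
by rewrite !inE => /orP[/eqP sa|/eqP //]; rewrite -sa sS in aS.
Qed.

Lemma edge_notin_imset x u v (A : {set 'I_n}) :
  x != u -> x != v -> edge u v \notin edge x @: A.
Proof.
move=> xu xv; apply/imsetP => -[w _ e].
have : x \in edge u v by rewrite e !inE eqxx.
by rewrite !inE (negbTE xu) (negbTE xv).
Qed.

Lemma disjoint_edge_imset x x' (A : {set 'I_n}) :
  x' != x -> x' \notin A -> [disjoint edge x @: A & edge x' @: A].
Proof.
move=> x'x x'A; rewrite disjoint_subset; apply/fintype.subsetP => e /imsetP[w wA ->].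
by rewrite inE edge_notin_imset //; apply: contraNneq x'A => ->.
Qed.

(* Indicator of the event witnessing that (a, S) is a star separation with
   y outside st(a) and S; its factors depend on disjoint sets of edges. *)
Definition sep_witness a y S E : R :=
  \prod_(s in S) (edge a s \notin E)%:R * ((edge a y \notin E)%:R *
  (\prod_(s in S) (edge y s \notin E)%:R *
   \prod_(x in ~: (a |: S) :\ y) present_or_avoid S (edge x a) (edge x) E)).

Ltac vertex_neq nS := solve [ assumption | rewrite eq_sym; assumption
  | by apply: nS | by rewrite eq_sym; apply: nS ].

Ltac edge_neq nS := first
  [ apply: edge_neqL; vertex_neq nS | apply: edge_neqR; vertex_neq nS
  | rewrite eq_sym; apply: edge_neqL; vertex_neq nS
  | rewrite eq_sym; apply: edge_neqR; vertex_neq nS ].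

Lemma pexpect_sep_witness (p : R) a y S : a \notin S -> y \in ~: (a |: S) ->
  pexpect p (pairs n) (sep_witness a y S) =
  (1 - p) ^+ (#|S| + #|S|.+1) * (p + (1 - p) ^+ #|S|.+1) ^+ (#|~: (a |: S)| - 1).
Proof.
move=> aS yA.
have nS x s : x \notin S -> s \in S -> x != s.
  by move=> xS sS; apply: contraNneq xS => ->.
have [ya yS] : y != a /\ y \notin S by move: yA; rewrite !inE negb_or => /andP[].
set X := ~: (a |: S) :\ y.
have Xfacts x : x \in X -> [/\ x != y, x != a & x \notin S].
  by rewrite !inE negb_or => /and3P[].
have block_indep e : (forall x, x \in X -> e \notin edge x @: (a |: S)) ->
    indep_of e (fun E => \prod_(x in X) present_or_avoid S (edge x a) (edge x) E).
  move=> eX; apply: indep_of_prod => x xX; apply: indep_of_present_or_avoid.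
  by rewrite -imsetU1; apply: eX.
have pairs_a s : s \in S -> edge a s \in pairs n.
  by move=> sS; apply: edge_pairs; vertex_neq nS.
have pairs_y s : s \in S -> edge y s \in pairs n.
  by move=> sS; apply: edge_pairs; vertex_neq nS.
rewrite /sep_witness (pexpect_avoid _ (edge_injr aS) pairs_a); last first.
  move=> s sS; apply: indep_ofM; first by apply: indep_of_notin; edge_neq nS.
  apply: indep_ofM.
    by apply: indep_of_prod => s' s'S; apply: indep_of_notin; edge_neq nS.
  by apply: block_indep => x /Xfacts[xy xa xS]; apply: edge_notin_imset; vertex_neq nS.
rewrite pexpect_notin; first last.
- apply: indep_ofM.
    by apply: indep_of_prod => s sS; apply: indep_of_notin; edge_neq nS.
  by apply: block_indep => x /Xfacts[xy xa xS]; apply: edge_notin_imset; vertex_neq nS.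
- by apply: edge_pairs; vertex_neq nS.
rewrite (pexpect_avoid _ (edge_injr yS) pairs_y); last first.
  move=> s sS; apply: block_indep => x /Xfacts[xy xa xS].
  by apply: edge_notin_imset; vertex_neq nS.
rewrite pexpect_prod_present_or_avoid; first last.
- move=> x x' _ /Xfacts[_ x'a x'S] xx'; rewrite -!imsetU1.
  by apply: disjoint_edge_imset; rewrite 1?eq_sym // !inE negb_or x'a.
- by move=> x s /Xfacts[xy xa xS] sS; edge_neq nS.
- by move=> x s /Xfacts[xy xa xS] sS; apply: edge_pairs; vertex_neq nS.
- by move=> x /Xfacts[xy xa xS]; apply: edge_injr.
- by move=> x /Xfacts[xy xa xS]; apply: edge_pairs.
by rewrite /X [#|~: _|](cardsD1 y) yA subSS subn0 exprD exprS !mulrA.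
Qed.

Lemma sep_witness_ge0 a y S E : 0 <= sep_witness a y S E.
Proof.
rewrite /sep_witness !mulr_ge0 ?prodr_ge0 // => x _.
exact: present_or_avoid_ge0.
Qed.

Lemma star_sep_witness E a S : star_sep E a S ->
  a \notin S /\ exists2 y, y \in ~: (a |: S) & sep_witness a y S E = 1.
Proof.
rewrite /star_sep /is_sep => /andP[SW /and4P[_ _ SnW /forallP Ssep]].
set W := ~: star E a in SW SnW Ssep.
have inW x : (x \in W) = (x != a) && (edge a x \notin E).
  rewrite /W /star !inE /adj negb_or negb_and negbK.
  by case: (x =P a) => [->|/eqP xa] //=; rewrite eq_sym (negbTE xa).
have Sa s : s \in S -> (s != a) && (edge a s \notin E).
  by move=> sS; rewrite -inW (fintype.subsetP SW).
have aS : a \notin S by apply/negP => /Sa; rewrite eqxx.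
have [y yW yS] : exists2 y, y \in W & y \notin S.
  apply/fintype.subsetPn; apply: contra SnW => WS.
  by rewrite finset.eqEsubset SW WS.
have noedge s x : s \in S -> x \in W -> x \notin S -> edge x s \notin E.
  move=> sS xW xS; move: (Ssep s); rewrite sS => /forallP/(_ x).
  rewrite finset.in_setD xS xW /adj negb_and negbK edgeC.
  by case/orP => // /eqP sx; rewrite -sx sS in xS.
have /andP[ya yE] : (y != a) && (edge a y \notin E) by rewrite -inW.
split=> //; exists y.
  by rewrite !inE negb_or ya.
rewrite /sep_witness yE big1 => [|s /Sa /andP[_ ->] //].
rewrite big1 => [|s sS]; last by rewrite noedge.
rewrite !mul1r big1 // => x; rewrite !inE negb_or => /and3P[xy xa xS].
rewrite /present_or_avoid edgeC.
case: (boolP (edge a x \in E)) => [_|xE] /=; first by rewrite mul0r addr0.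
rewrite add0r mul1r big1 // => s sS; rewrite noedge // inW xa.
by rewrite xE.
Qed.

Lemma proper_star_ksep_le E k a S :
  (proper_star_ksep E k a S)%:R <=
  ((a \notin S) && (#|S| == k))%:R * \sum_(y in ~: (a |: S)) sep_witness a y S E.
Proof.
have [/and3P[/star_sep_witness[aS [y yA wy]] /eqP-> _]|_] :=
  boolP (proper_star_ksep E k a S); last first.
  by apply: mulr_ge0 => //; apply: sumr_ge0 => x _; apply: sep_witness_ge0.
rewrite aS eqxx mul1r (bigD1 y) //= wy lerDl.
by apply: sumr_ge0 => x _; apply: sep_witness_ge0.
Qed.

Lemma sum_pointed_ksets k :
  \sum_(aS : 'I_n * {set 'I_n}) ((aS.1 \notin aS.2) && (#|aS.2| == k))%:R
  = (n * 'C(n.-1, k))%:R :> R.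
Proof.
rewrite -(pair_bigA _ (fun a S => ((a \notin S) && (#|S| == k))%:R)) /=.
rewrite (eq_bigr (fun _ => ('C(n.-1, k))%:R)) ?sumr_const ?card_ord ?natrM ?mulr_natl //.
move=> a _; rewrite (eq_bigr (fun S => if S \in [set S : {set 'I_n} |
    S \subset [set~ a] & #|S| == k] then 1 else 0)); last first.
  by move=> S _; rewrite inE finset.subsetC finset.sub1set !inE; case: (_ && _).
rewrite -big_mkcond /=.
by rewrite sumr_const cards_draws cardsC1 card_ord.
Qed.

Lemma U_le_sep_witness k E : (U k E)%:R <=
  \sum_(aS : 'I_n * {set 'I_n}) ((aS.1 \notin aS.2) && (#|aS.2| == k))%:R *
    \sum_(y in ~: (aS.1 |: aS.2)) sep_witness aS.1 y aS.2 E.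
Proof.
have -> : (U k E)%:R = \sum_(aS : 'I_n * {set 'I_n})
    (proper_star_ksep E k aS.1 aS.2)%:R :> R.
  rewrite /U -sum1_card natr_sum big_mkcond /=.
  by apply: eq_bigr => aS _; rewrite inE; case: (proper_star_ksep _ _ _ _).
by apply: ler_sum => aS _; apply: proper_star_ksep_le.
Qed.

Lemma gnp_expect_U_le (p : R) k : 0 <= p -> p <= 1 ->
  gnp_expect p (fun E => (U k E)%:R) <= (n * 'C(n.-1, k) * (n - k.+1))%:R *
    ((1 - p) ^+ (k + k.+1) * (p + (1 - p) ^+ k.+1) ^+ (n - k.+2)).
Proof.
move=> p0 p1; set V := _ * _ ^+ _.
apply: le_trans (ler_pexpect (pairs n) p0 p1 (U_le_sep_witness k)) _.
rewrite pexpect_sum (eq_bigr (fun aS : 'I_n * {set 'I_n} =>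
  ((aS.1 \notin aS.2) && (#|aS.2| == k))%:R * ((n - k.+1)%:R * V))).
  by rewrite -mulr_suml sum_pointed_ksets mulrA -natrM.
move=> [a S] _ /=; rewrite pexpectZ pexpect_sum.
have [/andP[aS /eqP Sk]|_] := boolP ((a \notin S) && (#|S| == k)); last by rewrite !mul0r.
have cardA : #|~: (a |: S)| = (n - k.+1)%N.
  by have := cardsC (a |: S); rewrite cardsU1 aS Sk card_ord /=; lia.
rewrite (eq_bigr (fun _ => V)) ?sumr_const ?cardA ?mulr_natl // => y yA.
by rewrite pexpect_sep_witness // Sk cardA subn1 -subnS.
Qed.
End StarSeparations.

Lemma ratio_le_cvg_series (R : realType) (u : R ^nat) (r : R) (N : nat) :
    0 < r < 1 -> (forall m, 0 <= u m) ->
    (forall m, (N <= m)%N -> u m.+1 <= r * u m) ->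
  cvgn (series u).
Proof.
move=> /andP[r0 r1] u0 ur.
set C := \sum_(i < N.+1) u i / r ^+ i.
have le_C i : (i <= N)%N -> u i / r ^+ i <= C.
  move=> iN; rewrite /C (bigD1 (Ordinal (iN : (i < N.+1)%N))) //= lerDl.
  by apply: sumr_ge0 => j _; rewrite divr_ge0 ?u0 ?exprn_ge0 ?ltW.
have decay i : u (N + i)%N <= u N * r ^+ i.
  elim: i => [|i IH]; first by rewrite addn0 mulr1.
  rewrite addnS (le_trans (ur _ (leq_addr _ _))) // exprS mulrCA.
  exact: ler_wpM2l _ (ltW r0) _ _ IH.
have le_Cr i : (i <= N)%N -> u i <= C * r ^+ i.
  by move=> iN; rewrite -ler_pdivrMr ?exprn_gt0 ?le_C.
have dom m : u m <= geometric C r m.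
  have [/le_Cr //|/ltnW Nm] := leqP m N.
  rewrite /= -(subnKC Nm) (le_trans (decay _)) // exprD mulrA.
  by rewrite ler_pM2r ?exprn_gt0 ?le_Cr.
have C0 : 0 <= C by rewrite (le_trans (u0 0%N)) // -[u 0%N]divr1 le_C.
apply: (@series_le_cvg _ u (geometric C r) u0 _ dom) => [m|].
  by rewrite /= mulr_ge0 // exprn_ge0 // ltW.
by apply: is_cvg_geometric_series; rewrite ger0_norm ?ltW.
Qed.

Lemma binomial_term_le1 (R : realFieldType) (x s : R) n j :
  0 <= x -> 0 <= s -> s + x = 1 -> 'C(n, j)%:R * x ^+ j * s ^+ (n - j) <= 1.
Proof.
move=> x0 s0 sx1; have [jn|nj] := leqP j n; last by rewrite bin_small // !mul0r.
rewrite [leRHS](_ : 1 = (s + x) ^+ n); last by rewrite sx1 expr1n.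
rewrite exprDn (bigD1 (Ordinal (jn : (j < n.+1)%N))) //=.
rewrite [leLHS](_ : _ = s ^+ (n - j) * x ^+ j *+ 'C(n, j)); last first.
  by rewrite -mulr_natl; ring.
rewrite lerDl; apply: sumr_ge0 => i _.
by rewrite mulrn_wge0 // mulr_ge0 ?exprn_ge0.
Qed.

Lemma mul_bin_star n k :
  (n * 'C(n.-1, k) * (n - k.+1) = k.+1 * k.+2 * 'C(n, k.+2))%N.
Proof.
by rewrite mul_bin_diag -mulnA [('C(n, k.+1) * _)%N]mulnC -mul_bin_left mulnA.
Qed.

Definition sep_bound (R : realFieldType) (k : nat) : R :=
  (k.+1 * k.+2)%:R * (3 / 5) ^+ k.-1 / (1 - (3 / 5) ^+ k) ^+ k.+2.

Lemma le_sep_bound (R : realFieldType) n k (p : R) :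
    (0 < k)%N -> 2 / 5 <= p -> p <= 1 ->
  (n * 'C(n.-1, k) * (n - k.+1))%:R *
    ((1 - p) ^+ (k + k.+1) * (p + (1 - p) ^+ k.+1) ^+ (n - k.+2)) <= sep_bound R k.
Proof.
case: k => // m _ p25 p1; set q := 1 - p.
have q0 : 0 <= q by rewrite subr_ge0.
have q35 : q <= 3 / 5 by rewrite /q; lra.
set A := 1 - q ^+ m.+1; set x := q * A; set s := p + q ^+ m.+2.
have A_ge : 1 - (3 / 5 : R) ^+ m.+1 <= A.
  by rewrite lerD2l lerN2 lerXn2r ?nnegrE //; lra.
have A35 : 0 < 1 - (3 / 5 : R) ^+ m.+1 by rewrite subr_gt0 exprn_ilt1 //; lra.
have A0 : 0 < A := lt_le_trans A35 A_ge.
have binom : 'C(n, m.+3)%:R * x ^+ m.+3 * s ^+ (n - m.+3) <= 1.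
  apply: binomial_term_le1; first by rewrite /x mulr_ge0 // ltW.
    by rewrite /s addr_ge0 ?exprn_ge0 //; lra.
  by rewrite /s /x /A /q !exprS; ring.
rewrite mul_bin_star natrM /sep_bound /=.
have -> : q ^+ (m.+1 + m.+2) = q ^+ m * q ^+ m.+3 by rewrite -exprD; congr (_ ^+ _); lia.
set K := (m.+2 * m.+3)%:R.
have key : 'C(n, m.+3)%:R * q ^+ m.+3 * s ^+ (n - m.+3) <= (A ^+ m.+3)^-1.
  rewrite -[leRHS]mul1r ler_pdivlMr ?exprn_gt0 //; apply: le_trans binom.
  rewrite [leRHS](_ : _ = 'C(n, m.+3)%:R * q ^+ m.+3 * s ^+ (n - m.+3) * A ^+ m.+3) //.
  by rewrite /x exprMn; ring.
apply: (@le_trans _ _ (K * q ^+ m / A ^+ m.+3)).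
  rewrite [leLHS](_ : _ = K * q ^+ m * ('C(n, m.+3)%:R * q ^+ m.+3 * s ^+ (n - m.+3)));
    last by ring.
  by apply: ler_wpM2l key; rewrite mulr_ge0 ?exprn_ge0.
rewrite -!mulrA ler_wpM2l // ler_pM ?exprn_ge0 ?invr_ge0 ?exprn_ge0 ?(ltW A0) //.
  by rewrite lerXn2r ?nnegrE //; lra.
rewrite lef_pV2 ?posrE ?exprn_gt0 //.
by apply: lerXn2r; rewrite // nnegrE ltW.
Qed.

Lemma sep_bound_gt0 (R : realFieldType) k : (0 < k)%N -> 0 < sep_bound R k.
Proof.
case: k => // k _.
have c0 : 0 < 1 - (3 / 5 : R) ^+ k.+1 by rewrite subr_gt0 exprn_ilt1 //; lra.
apply: divr_gt0; last exact: exprn_gt0.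
by rewrite mulr_gt0 ?exprn_gt0 ?ltr0n //; lra.
Qed.

Lemma sep_bound_ratio (R : realFieldType) m : (3 <= m)%N ->
  sep_bound R m.+2 <= 19 / 20 * sep_bound R m.+1.
Proof.
move=> m3; rewrite /sep_bound /=.
set c : R := 3/5.
set P := c ^+ m.
set A := 1 - c ^+ m.+1.
set B := 1 - c ^+ m.+2.
have cP : c ^+ m.+1 = c * P by rewrite exprS.
have cP2 : c ^+ m.+2 = c * (c * P) by rewrite !exprS.
have P0 : 0 <= P by apply: exprn_ge0; rewrite /c; lra.
have P5 : P <= c ^+ 3 by apply: ler_wiXn2l => //; rewrite /c; lra.
have c3 : c ^+ 3 = 27/125 by rewrite /c !exprS expr0; lra.
have AB : A <= B by rewrite /A /B cP cP2 /c; nra.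
have A0 : 0 < A by rewrite /A cP /c; nra.
have B0 : 0 < B by apply: lt_le_trans AB.
have M3 : 3 <= m%:R :> R by rewrite ler_nat.
have key : (m%:R + 4) * c <= 19/20 * ((m%:R + 2) * B).
  (* 2882/3125 = 1 - (3/5)^5, and m.+2 >= 5 *)
  have B_ge : 2882/3125 <= B by rewrite /B cP2 /c; nra.
  rewrite /c; nra.
rewrite ler_pdivrMr; last by apply: exprn_gt0.
rewrite (exprS B) mulrA.
set X2 := (m.+2 * m.+3)%:R * P.
apply: (@le_trans _ _ (19/20 * X2 * B)).
  have n2 : (m.+2)%:R = m%:R + 2 :> R by rewrite -addn2 natrD.
  have n3 : (m.+3)%:R = m%:R + 3 :> R by rewrite -addn3 natrD.
  have n4 : (m.+4)%:R = m%:R + 4 :> R by rewrite -addn4 natrD.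
  rewrite /X2 cP !natrM n2 n3 n4.
  have h : ((m%:R + 3) * P) * ((m%:R + 4) * c) <=
           ((m%:R + 3) * P) * (19/20 * ((m%:R + 2) * B)).
    by apply: ler_wpM2l => //; apply: mulr_ge0 => //; lra.
  move: h; nra.
rewrite [leRHS](_ : _ = 19 / 20 * X2 * B * (B ^+ m.+3 / A ^+ m.+3)); last by ring.
apply: ler_peMr.
  apply: mulr_ge0; last exact: ltW.
  by apply: mulr_ge0; [lra | apply: mulr_ge0].
rewrite ler_pdivlMr ?mul1r; last by apply: exprn_gt0.
by apply: lerXn2r; rewrite // nnegrE ltW.
Qed.

Local Open Scope classical_set_scope.
Unset Implicit Arguments.

Theorem proposition3p4 (R : realType) :
  exists a : nat -> R,
    (forall k : nat, (0 < k)%N -> 0 < a k) /\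
    cvgn (series (fun k => a k.+1)) /\
    (forall (k n : nat) (p : R), (0 < k)%N -> (2 * k <= n)%N ->
       2 / 5 <= p -> p <= 1 ->
       @gnp_expect R n p (fun E => (U k E)%:R) <= a k).
Proof.
exists (sep_bound R); split; [|split].
- exact: sep_bound_gt0.
- apply: (@ratio_le_cvg_series _ _ (19 / 20) 3).
  + by apply/andP; split; lra.
  + by move=> k; apply/ltW/sep_bound_gt0.
  + by move=> m m3; apply: sep_bound_ratio.
- (* the bound holds for every n *)
  move=> k n p k0 _ p25 p1.
  apply: le_trans _ (le_sep_bound n k0 p25 p1).
  by apply: gnp_expect_U_le; lra.
Qed.
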